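(* Let $(p_n),(q_n)$ be sequences in $[0,1]$. If $P(n,p_n,q_n)=o(n^{-1})$, then for any $\alpha>0$, $P(\lfloor\alpha n\rfloor,p_n,q_n)\to0$ as $n\to\infty$.
   Context: For integers $m,n\ge0$ and $p,q\in[0,1]$, $P(m,n,p,q)=\Pr(Y\ge X)$ where $X\sim\mathrm{Binom}(m,\max\{p,q\})$ and $Y\sim\mathrm{Binom}(n,\min\{p,q\})$ are independent; $P(n,p,q)=P(n,n,p,q)$. *)

From Stdlib Require Import Reals Lra Lia.
From Coquelicot Require Import Coquelicot.
Open Scope R_scope.

Definition binom_pmf (m : nat) (a : R) (k : nat) : R :=
  Binomial.C m k * a ^ k * (1 - a) ^ (m - k).

(* P(m,n,p,q) = Pr(Y >= X), X ~ Binom(m, max p q), Y ~ Binom(n, min p q)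
   independent:  sum over i = 0..m, j = 0..n with i <= j of
   Pr(X = i) Pr(Y = j). *)
Definition Pmn (m n : nat) (p q : R) : R :=
  sum_f_R0 (fun i =>
    sum_f_R0 (fun j =>
      if Nat.leb i j
      then binom_pmf m (Rmax p q) i * binom_pmf n (Rmin p q) j
      else 0) n) m.

Definition Pn (n : nat) (p q : R) : R := Pmn n n p q.

Definition nat_floor (x : R) : nat := Z.to_nat (Int_part x).

From Stdlib Require Import Reals Lra Lia ZArith.
From Coquelicot Require Import Coquelicot.
Open Scope R_scope.

(* Write a = max p q >= b = min p q.  P(m, p, q) = Pr(S_m >= 0) for the lazy walk
   S = Y - X, whose steps +1, 0, -1 have probabilities b(1-a), ab + (1-a)(1-b),
   a(1-b).  Cutting a walk of length k m into k independent pieces gives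
   P(m)^k <= P(k m).  Moreover P(n) is nonincreasing in n: P(n+1) - P(n) equals
   b(1-a) Pr(S_n = -1) - a(1-b) Pr(S_n = 0), which is <= 0 by AM-GM applied to
   consecutive products of binomial weights.  Taking k with k alpha >= 2, every
   n >= k satisfies n <= k floor(alpha n), so P(floor(alpha n))^k <= P(n) -> 0;
   only P(n) -> 0 is used from the hypothesis. *)

Definition delay (g : nat -> R) (i : nat) : R :=
  match i with O => 0 | S k => g k end.

Lemma sum_mul_delay (h g : nat -> R) N : g N = 0 ->
  sum_f_R0 (fun j => h j * delay g j) N = sum_f_R0 (fun j => h (S j) * g j) N.
Proof.
  intros HgN. rewrite <- (Rplus_0_r (sum_f_R0 _ N)), <- (Rmult_0_r (h (S N))), <- HgN.
  clear HgN. induction N as [|N IH]; simpl; [ring|]. rewrite <- IH; ring.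
Qed.

Lemma sum_indicator (g : nat -> R) N k : (k <= N)%nat ->
  sum_f_R0 (fun j => (if Nat.eqb j k then 1 else 0) * g j) N = g k.
Proof.
  induction N as [|N IH]; intros Hk.
  - replace k with O by lia. simpl. ring.
  - rewrite tech5. destruct (Nat.eqb_spec (S N) k) as [<-|Hne].
    + rewrite sum_eq_R0; [ring|].
      intros j Hj. destruct (Nat.eqb_spec j (S N)); [lia|ring].
    + rewrite IH by lia. ring.
Qed.

Definition bin_step (a : R) (x : nat -> R) (i : nat) : R :=
  a * delay x i + (1 - a) * x i.

(* The binomial weights, extended by 0 beyond [n]; unlike [binom_pmf n a i],
   whose binomial coefficient is junk for [i > n]. *)
Fixpoint bpmf (n : nat) (a : R) : nat -> R :=
  match n with
  | O => fun i => if Nat.eqb i 0 then 1 else 0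
  | S n => bin_step a (bpmf n a)
  end.

Lemma bpmf_above n a i : (n < i)%nat -> bpmf n a i = 0.
Proof.
  revert i; induction n as [|n IH]; intros [|i] Hi; simpl; try lia; auto.
  unfold bin_step; simpl. rewrite !IH by lia. ring.
Qed.

Lemma bpmf_binom_pmf n a i : (i <= n)%nat -> bpmf n a i = binom_pmf n a i.
Proof.
  unfold binom_pmf. revert i; induction n as [|n IH]; intros i Hi.
  - replace i with O by lia. simpl. rewrite C_n_0. ring.
  - simpl bpmf. unfold bin_step. destruct i as [|i]; simpl delay.
    + rewrite IH, !C_n_0 by lia. simpl. rewrite Nat.sub_0_r. ring.
    + destruct (Nat.eq_dec i n) as [->|Hin].
      * rewrite (bpmf_above n a (S n)), IH by lia.
        rewrite !C_n_n, !Nat.sub_diag. simpl. ring.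
      * rewrite !IH, <- pascal by lia.
        replace (S n - S i)%nat with (S (n - S i)) by lia.
        replace (n - i)%nat with (S (n - S i)) by lia. simpl. ring.
Qed.

Lemma bpmf_ge0 n a i : 0 <= a <= 1 -> 0 <= bpmf n a i.
Proof.
  intros Ha. revert i; induction n as [|n IH]; intros [|i]; simpl; try lra;
    unfold bin_step; simpl.
  - pose proof (IH 0%nat). nra.
  - pose proof (IH i). pose proof (IH (S i)). nra.
Qed.

Lemma bpmf_balance n a b i :
  b * (1 - a) * bpmf n a (S i) * bpmf n b i = a * (1 - b) * bpmf n a i * bpmf n b (S i).
Proof.
  destruct (le_lt_dec (S i) n).
  - rewrite !bpmf_binom_pmf by lia. unfold binom_pmf.
    replace (n - i)%nat with (S (n - S i)) by lia. simpl. ring.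
  - rewrite !(bpmf_above n _ (S i)) by lia. ring.
Qed.

Definition ind (d : Z) (i j : nat) : R :=
  if Z.leb (Z.of_nat i + d) (Z.of_nat j) then 1 else 0.

Lemma ind_S_l d i j : ind d (S i) j = ind (d + 1) i j.
Proof. unfold ind. now replace (Z.of_nat (S i) + d)%Z with (Z.of_nat i + (d + 1))%Z by lia. Qed.

Lemma ind_S_r d i j : ind d i (S j) = ind (d - 1) i j.
Proof.
  unfold ind. destruct (Z.leb_spec (Z.of_nat i + d) (Z.of_nat (S j)));
    destruct (Z.leb_spec (Z.of_nat i + (d - 1)) (Z.of_nat j)); lia || easy.
Qed.

(* For [x], [y] the laws of independent [X], [Y] supported in [0..N],
   [pair_tail N x y d] is [Pr(Y - X >= d)]. *)
Definition row_tail N (y : nat -> R) d i : R := sum_f_R0 (fun j => ind d i j * y j) N.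

Definition pair_tail N (x y : nat -> R) d : R := sum_f_R0 (fun i => x i * row_tail N y d i) N.

Lemma row_tail_S N y d i : row_tail N y d (S i) = row_tail N y (d + 1) i.
Proof. apply sum_eq; intros j _. now rewrite ind_S_l. Qed.

Lemma row_tail_bin_step N y b d i : y N = 0 ->
  row_tail N (bin_step b y) d i = b * row_tail N y (d - 1) i + (1 - b) * row_tail N y d i.
Proof.
  intros HyN. unfold row_tail, bin_step.
  rewrite (sum_eq _ (fun j => ind d i j * delay y j * b + ind d i j * y j * (1 - b)))
    by (intros; ring).
  rewrite plus_sum, <- !scal_sum.
  rewrite (sum_mul_delay (ind d i)) by exact HyN.
  f_equal. f_equal. apply sum_eq; intros j _. now rewrite ind_S_r.
Qed.

Lemma pair_tail_bin_step N x y a b d : x N = 0 -> y N = 0 ->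
  pair_tail N (bin_step a x) (bin_step b y) d =
  b * (1 - a) * pair_tail N x y (d - 1) + (a * b + (1 - a) * (1 - b)) * pair_tail N x y d
  + a * (1 - b) * pair_tail N x y (d + 1).
Proof.
  intros HxN HyN. unfold pair_tail.
  set (r i := b * row_tail N y (d - 1) i + (1 - b) * row_tail N y d i).
  rewrite (sum_eq _ (fun i => r i * delay x i * a + x i * r i * (1 - a)))
    by (intros; rewrite row_tail_bin_step by exact HyN; unfold bin_step, r; ring).
  rewrite plus_sum, <- !scal_sum, (sum_mul_delay r x N HxN), !scal_sum, <- !plus_sum.
  apply sum_eq; intros i _.
  unfold r. rewrite !row_tail_S. replace (d - 1 + 1)%Z with d by ring. ring.
Qed.

Lemma row_tail_diff0 N y i : (i <= N)%nat -> row_tail N y 0 i - row_tail N y 1 i = y i.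
Proof.
  intros Hi. unfold row_tail. rewrite <- minus_sum, <- (sum_indicator y N i Hi).
  apply sum_eq; intros j _. unfold ind.
  destruct (Z.leb_spec (Z.of_nat i + 0) (Z.of_nat j)), (Z.leb_spec (Z.of_nat i + 1) (Z.of_nat j)),
    (Nat.eqb_spec j i); lia || ring.
Qed.

Lemma row_tail_diff_neg1 N y i : (i <= N)%nat ->
  row_tail N y (-1) i - row_tail N y 0 i = delay y i.
Proof.
  intros Hi. destruct i as [|i]; simpl delay.
  - unfold row_tail. rewrite <- minus_sum. apply sum_eq_R0; intros j _. unfold ind.
    destruct (Z.leb_spec (Z.of_nat 0 + -1) (Z.of_nat j)), (Z.leb_spec (Z.of_nat 0 + 0) (Z.of_nat j));
      lia || ring.
  - rewrite !row_tail_S. apply row_tail_diff0. lia.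
Qed.

Lemma pair_tail_diff0 N x y :
  pair_tail N x y 0 - pair_tail N x y 1 = sum_f_R0 (fun i => x i * y i) N.
Proof.
  unfold pair_tail. rewrite <- minus_sum. apply sum_eq; intros i Hi.
  rewrite <- (row_tail_diff0 N y i Hi). ring.
Qed.

Lemma pair_tail_diff_neg1 N x y :
  pair_tail N x y (-1) - pair_tail N x y 0 = sum_f_R0 (fun i => x i * delay y i) N.
Proof.
  unfold pair_tail. rewrite <- minus_sum. apply sum_eq; intros i Hi.
  rewrite <- (row_tail_diff_neg1 N y i Hi). ring.
Qed.

(* [walk_tail up stay down n d] is [Pr(S_n >= d)] for the lazy walk [S] started at 0
   whose steps are [+1], [0], [-1] with probabilities [up], [stay], [down]. *)
Fixpoint walk_tail (up stay down : R) (n : nat) (d : Z) : R :=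
  match n with
  | O => if Z.leb d 0 then 1 else 0
  | S n => up * walk_tail up stay down n (d - 1) + stay * walk_tail up stay down n d
           + down * walk_tail up stay down n (d + 1)
  end.

Section Walk.
Variables up stay down : R.
Hypothesis up_ge0 : 0 <= up.
Hypothesis stay_ge0 : 0 <= stay.
Hypothesis down_ge0 : 0 <= down.
Hypothesis steps_sum1 : up + stay + down = 1.
Local Notation W := (walk_tail up stay down).

Lemma walk_tail_bounds n d : 0 <= W n d <= 1.
Proof.
  revert d; induction n as [|n IH]; intros d; simpl.
  - destruct (Z.leb d 0); lra.
  - pose proof (IH (d - 1)%Z); pose proof (IH d); pose proof (IH (d + 1)%Z). nra.
Qed.

Lemma walk_tail_antitone n d d' : (d <= d')%Z -> W n d' <= W n d.
Proof.
  revert d d'; induction n as [|n IH]; intros d d' Hd; simpl.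
  - destruct (Z.leb_spec d' 0), (Z.leb_spec d 0); lra || lia.
  - pose proof (IH (d - 1)%Z (d' - 1)%Z ltac:(lia)); pose proof (IH d d' Hd);
      pose proof (IH (d + 1)%Z (d' + 1)%Z ltac:(lia)). nra.
Qed.

(* [S_(r+s)] is [S_r] plus an independent copy of [S_s]. *)
Lemma walk_tail_supermul r s d1 d2 : W r d1 * W s d2 <= W (r + s) (d1 + d2).
Proof.
  revert d2; induction s as [|s IH]; intros d2.
  - rewrite Nat.add_0_r. simpl. pose proof (walk_tail_bounds r d1).
    destruct (Z.leb_spec d2 0).
    + rewrite Rmult_1_r. apply walk_tail_antitone. lia.
    + pose proof (walk_tail_bounds r (d1 + d2)). lra.
  - rewrite Nat.add_succ_r. simpl.
    replace (d1 + d2 - 1)%Z with (d1 + (d2 - 1))%Z by ring.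
    replace (d1 + d2 + 1)%Z with (d1 + (d2 + 1))%Z by ring.
    pose proof (IH (d2 - 1)%Z); pose proof (IH d2); pose proof (IH (d2 + 1)%Z).
    pose proof (walk_tail_bounds r d1). nra.
Qed.

Lemma walk_tail_pow_le k m : W m 0 ^ k <= W (k * m) 0.
Proof.
  induction k as [|k IH]; simpl; [lra|].
  pose proof (walk_tail_supermul m (k * m) 0 0) as Hmul. simpl in Hmul.
  pose proof (walk_tail_bounds m 0). nra.
Qed.

End Walk.

Definition bin_walk_tail (a b : R) : nat -> Z -> R :=
  walk_tail (b * (1 - a)) (a * b + (1 - a) * (1 - b)) (a * (1 - b)).

Lemma bin_walk_tail_pair_tail a b n N d : (n <= N)%nat ->
  bin_walk_tail a b n d = pair_tail N (bpmf n a) (bpmf n b) d.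
Proof.
  revert d; induction n as [|n IH]; intros d HnN.
  - unfold pair_tail. simpl bpmf. rewrite (sum_indicator _ N 0) by lia.
    unfold row_tail. rewrite (sum_eq _ (fun j => (if Nat.eqb j 0 then 1 else 0) * ind d 0 j))
      by (intros; ring).
    rewrite (sum_indicator _ N 0) by lia. unfold ind, bin_walk_tail. simpl. now destruct (Z.leb d 0).
  - simpl bpmf. unfold bin_walk_tail. simpl walk_tail. fold (bin_walk_tail a b).
    rewrite !IH, pair_tail_bin_step by (lia || apply bpmf_above; lia). ring.
Qed.

Lemma Pn_bin_walk_tail m p q : Pn m p q = bin_walk_tail (Rmax p q) (Rmin p q) m 0.
Proof.
  rewrite (bin_walk_tail_pair_tail _ _ m m) by lia.
  unfold Pn, Pmn, pair_tail, row_tail. apply sum_eq; intros i Hi.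
  rewrite scal_sum. apply sum_eq; intros j Hj.
  rewrite !bpmf_binom_pmf by lia. unfold ind.
  destruct (Nat.leb_spec i j), (Z.leb_spec (Z.of_nat i + 0) (Z.of_nat j)); lia || ring.
Qed.

(* By the balance identity [(u x_(i+1) y_i)^2 = u v p_i p_(i+1)], so AM-GM bounds each
   term by [v (p_i + p_(i+1)) / 2]. *)
Lemma balanced_shift_sum_le (x y : nat -> R) u v N :
  (forall i, 0 <= x i) -> (forall i, 0 <= y i) -> 0 <= u <= v ->
  (forall i, u * x (S i) * y i = v * x i * y (S i)) -> x (S N) = 0 ->
  u * sum_f_R0 (fun i => x (S i) * y i) N <= v * sum_f_R0 (fun i => x i * y i) N.
Proof.
  intros Hx Hy Huv Hbal HxN.
  set (p i := x i * y i).
  assert (Hp : forall i, 0 <= p i) by (intros; apply Rmult_le_pos; auto).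
  assert (Hterm : forall i, 2 * (u * (x (S i) * y i)) <= v * (p i + p (S i))).
  { intros i. apply Rsqr_incr_0_var; [|pose proof (Hp i); pose proof (Hp (S i)); nra].
    assert (Hsq : (2 * (u * (x (S i) * y i)))² = 4 * (u * v) * (p i * p (S i))).
    { unfold Rsqr, p. transitivity (4 * (u * x (S i) * y i) * (u * x (S i) * y i)); [ring|].
      rewrite Hbal at 2. ring. }
    rewrite Hsq. unfold Rsqr. pose proof (Hp i); pose proof (Hp (S i)).
    assert (u * v * (p i * p (S i)) <= v * v * (p i * p (S i)))
      by (apply Rmult_le_compat_r; nra).
    pose proof (pow2_ge_0 (v * (p i - p (S i)))). nra. }
  assert (Hshift : sum_f_R0 (fun i => p (S i)) N <= sum_f_R0 p N).
  { pose proof (decomp_sum p (S N) ltac:(lia)) as Hdec. rewrite tech5 in Hdec. simpl in Hdec.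
    assert (p (S N) = 0) by (unfold p; rewrite HxN; ring). pose proof (Hp 0%nat). lra. }
  assert (Hsum : sum_f_R0 (fun i => x (S i) * y i * (2 * u)) N
                 <= sum_f_R0 (fun i => (p i + p (S i)) * v) N).
  { apply sum_Rle; intros i _. specialize (Hterm i). lra. }
  rewrite <- !scal_sum, plus_sum in Hsum.
  assert (0 <= sum_f_R0 (fun i => p (S i)) N) by (apply cond_pos_sum; auto). nra.
Qed.

Lemma bin_walk_tail_succ_le a b n : 0 <= b <= a -> a <= 1 ->
  bin_walk_tail a b (S n) 0 <= bin_walk_tail a b n 0.
Proof.
  intros Hba Ha1.
  assert (Hdiff_neg1 : bin_walk_tail a b n (-1) - bin_walk_tail a b n 0 =
            sum_f_R0 (fun i => bpmf n a (S i) * bpmf n b i) (S n)).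
  { rewrite !(bin_walk_tail_pair_tail a b n (S n)), pair_tail_diff_neg1 by lia.
    apply sum_mul_delay, bpmf_above. lia. }
  assert (Hdiff0 : bin_walk_tail a b n 0 - bin_walk_tail a b n 1 =
            sum_f_R0 (fun i => bpmf n a i * bpmf n b i) (S n)).
  { rewrite !(bin_walk_tail_pair_tail a b n (S n)) by lia. apply pair_tail_diff0. }
  assert (Hbal : b * (1 - a) * sum_f_R0 (fun i => bpmf n a (S i) * bpmf n b i) (S n)
                 <= a * (1 - b) * sum_f_R0 (fun i => bpmf n a i * bpmf n b i) (S n)).
  { apply balanced_shift_sum_le.
    - intros; apply bpmf_ge0; lra.
    - intros; apply bpmf_ge0; lra.
    - split; nra.
    - intros; apply bpmf_balance.
    - apply bpmf_above; lia. }
  unfold bin_walk_tail in *. simpl walk_tail. nra.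
Qed.

Lemma bin_walk_tail_antitone a b m n : 0 <= b <= a -> a <= 1 -> (m <= n)%nat ->
  bin_walk_tail a b n 0 <= bin_walk_tail a b m 0.
Proof.
  intros Hba Ha1 Hmn. induction Hmn as [|n _ IH]; [lra|].
  pose proof (bin_walk_tail_succ_le a b n Hba Ha1). lra.
Qed.

Lemma Pn_bounds n p q : 0 <= p <= 1 -> 0 <= q <= 1 -> 0 <= Pn n p q <= 1.
Proof.
  intros Hp Hq. rewrite Pn_bin_walk_tail. unfold Rmax, Rmin.
  destruct (Rle_dec p q); apply walk_tail_bounds; nra.
Qed.

Lemma Pn_pow_le k m n p q : 0 <= p <= 1 -> 0 <= q <= 1 -> (n <= k * m)%nat ->
  Pn m p q ^ k <= Pn n p q.
Proof.
  intros Hp Hq Hnkm. rewrite !Pn_bin_walk_tail.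
  assert (Hba : 0 <= Rmin p q <= Rmax p q /\ Rmax p q <= 1)
    by (unfold Rmax, Rmin; destruct (Rle_dec p q); lra).
  destruct Hba as [Hba Ha1].
  eapply Rle_trans; [apply walk_tail_pow_le; nra|].
  apply bin_walk_tail_antitone; assumption.
Qed.

Lemma nat_floor_gt x : 0 <= x -> x - 1 < INR (nat_floor x).
Proof.
  intros Hx. unfold nat_floor. destruct (base_Int_part x) as [Hle Hgt].
  assert (Hint : (-1 < Int_part x)%Z) by (apply lt_IZR; lra).
  rewrite INR_IZR_INZ, Z2Nat.id by lia. lra.
Qed.

Lemma le_mul_nat_floor alpha k n : 2 <= INR k * alpha -> (k <= n)%nat ->
  (n <= k * nat_floor (alpha * INR n))%nat.
Proof.
  intros Hk Hkn. apply INR_le. rewrite mult_INR.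
  pose proof (pos_INR k). apply le_INR in Hkn.
  assert (Halpha : 0 < alpha) by nra.
  pose proof (nat_floor_gt (alpha * INR n) ltac:(nra)). nra.
Qed.

Lemma is_lim_seq_of_INR_mul (a : nat -> R) : (forall n, 0 <= a n) ->
  is_lim_seq (fun n => INR n * a n) 0 -> is_lim_seq a 0.
Proof.
  intros Ha Hlim.
  apply (is_lim_seq_le_le_loc (fun _ => 0) a (fun n => INR n * a n));
    [|apply is_lim_seq_const|exact Hlim].
  exists 1%nat. intros n Hn. apply le_INR in Hn. specialize (Ha n). simpl in Hn. nra.
Qed.

Lemma is_lim_seq_of_pow_le (a b : nat -> R) k K : (forall n, 0 <= a n) ->
  (forall n, (K <= n)%nat -> a n ^ k <= b n) -> is_lim_seq b 0 -> is_lim_seq a 0.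
Proof.
  intros Ha Hab Hb. apply is_lim_seq_spec in Hb. apply is_lim_seq_spec. intros eps.
  destruct (Hb (mkposreal _ (pow_lt eps k (cond_pos eps)))) as [N HN].
  exists (Nat.max N K). intros n Hn.
  specialize (HN n ltac:(lia)). simpl in HN. rewrite Rminus_0_r in HN.
  apply Rabs_lt_between in HN. specialize (Hab n ltac:(lia)).
  rewrite Rminus_0_r, Rabs_pos_eq by apply Ha.
  destruct (Rlt_or_le (a n) eps) as [Hlt|Hge]; [exact Hlt|].
  pose proof (pow_incr eps (a n) k ltac:(pose proof (cond_pos eps); lra)). lra.
Qed.

Theorem lemma4p4 (p q : nat -> R)
  (hp : forall n, 0 <= p n <= 1) (hq : forall n, 0 <= q n <= 1)
  (ho : is_lim_seq (fun n => INR n * Pn n (p n) (q n)) 0)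
  (alpha : R) (halpha : 0 < alpha) :
  is_lim_seq (fun n => Pn (nat_floor (alpha * INR n)) (p n) (q n)) 0.
Proof.
  destruct (INR_unbounded (2 / alpha)) as [k Hk].
  assert (Hk_alpha : 2 <= INR k * alpha).
  { unfold Rdiv in Hk. pose proof (Rinv_l alpha ltac:(lra)). nra. }
  apply (is_lim_seq_of_pow_le _ (fun n => Pn n (p n) (q n)) k k).
  - intros n. apply Pn_bounds; auto.
  - intros n Hn. apply Pn_pow_le; auto. apply le_mul_nat_floor; assumption.
  - apply is_lim_seq_of_INR_mul; [|exact ho]. intros n. apply Pn_bounds; auto.
Qed.
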